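(* Let $\pi\colon(\mathcal{G},R)\to(\mathcal{H},R)$ be a surjection of left bialgebroids over $R$ with left Hopf kernel $B=\mathcal{G}^{\mathrm{co}\mathcal{H}}$, and suppose $\mathcal{G}_\triangleleft$ is $R$-flat. (i) $B$ is a left $\mathcal{G}$-comodule algebra via $\lambda_B:=\Delta|_B\colon B\to\mathcal{G}\otimes_RB\subseteq\mathcal{G}\otimes_R\mathcal{G}$. (ii) The restriction $\varepsilon|_B\colon B\to R$ is an algebra morphism; in particular $B^+$ is a two-sided ideal in $B$ and $\mathcal{G}B^+\subseteq\ker\pi$. (iii) $\mathcal{G}B^+\subseteq\mathcal{G}$ is a left $\mathcal{G}$-module and a coring coideal, i.e. $\mathcal{G}B^+\subseteq\ker\varepsilon$ and $\Delta(\mathcal{G}B^+)\subseteq\mathcal{G}B^+\otimes_R\mathcal{G}+\mathcal{G}\otimes_R\mathcal{G}B^+$.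
   Context: $\Bbbk$ a commutative ring, $R$ a $\Bbbk$-algebra. Left bialgebroid $(\mathcal{G},R,s,t,\Delta,\varepsilon)$: $\Bbbk$-algebra, algebra map $s$ and anti-map $t\colon R\to\mathcal{G}$ with commuting images, $r\triangleright g\triangleleft r'=s(r)t(r')g$, $r\blacktriangleright g\blacktriangleleft r'=gt(r)s(r')$, coassociative counital $R$-bimodule map $\Delta\colon\mathcal{G}\to\mathcal{G}_\triangleleft\otimes_R{}_\triangleright\mathcal{G}$, $g\mapsto g_{(1)}\otimes g_{(2)}$, valued in the Takeuchi subspace and multiplicative, counit $\varepsilon\colon\mathcal{G}\to R$ with $\varepsilon(1)=1$, $\varepsilon(gg')=\varepsilon(g\blacktriangleleft\varepsilon(g'))=\varepsilon(\varepsilon(g')\blacktriangleright g)$. $\mathcal{G}_\triangleleft$: right $R$-module via $t$. A surjection of bialgebroids over $R$ is a surjective algebra map $\pi$ intertwining $s,t,\Delta,\varepsilon$. The left Hopf kernel is $B=\{g:g_{(1)}\otimes_R\pi(g_{(2)})=g\otimes_R1\}$, an $R$-subring with unit map $s$; $B^+=B\cap\ker\varepsilon$; $\mathcal{G}B^+$ is the left ideal generated by $B^+$. A left $\mathcal{G}$-comodule algebra is an $R$-ring $B$ with a coassociative counital left $R$-linear coaction $\lambda_B\colon B\to\mathcal{G}_\triangleleft\otimes_RB$ which is an algebra morphism. *)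

(* Tensor products over a (noncommutative) ring R are
   handled through their universal property (balanced biadditive maps). *)
From HB Require Import structures.
From mathcomp Require Import all_boot all_order all_algebra.

Set Implicit Arguments.
Unset Strict Implicit.
Unset Printing Implicit Defensive.

Import GRing.Theory.
Local Open Scope ring_scope.

(* The predicate P restricts the second argument to a subset of N      *)
(* (used for tensor products G ⊗_R B with B ⊆ G an R-submodule).       *)

Definition balanced_on (R : nzRingType) (M N A : zmodType) (P : N -> Prop)
    (ract : M -> R -> M) (lact : R -> N -> N) (f : M -> N -> A) : Prop :=
  [/\ forall m n n', P n -> P n' -> f m (n + n') = f m n + f m n',
      forall m m' n, P n -> f (m + m') n = f m n + f m' n &
      forall m r n, P n -> f (ract m r) n = f m (lact r n)].

(* Equality of the elements  sum_{(m,n) in xs} m ⊗ n  and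
   sum_{(m,n) in ys} m ⊗ n  in  M ⊗_R P. *)
Definition teq_on (R : nzRingType) (M N : zmodType) (P : N -> Prop)
    (ract : M -> R -> M) (lact : R -> N -> N) (xs ys : seq (M * N)) : Prop :=
  forall (A : zmodType) (f : M -> N -> A), balanced_on P ract lact f ->
    \sum_(p <- xs) f p.1 p.2 = \sum_(p <- ys) f p.1 p.2.

Definition teq (R : nzRingType) (M N : zmodType)
    (ract : M -> R -> M) (lact : R -> N -> N) (xs ys : seq (M * N)) : Prop :=
  teq_on (fun _ => True) ract lact xs ys.

Definition additive_fun (U V : zmodType) (f : U -> V) : Prop :=
  forall x y, f (x + y) = f x + f y.

Definition is_tensor (R : nzRingType) (M N T : zmodType)
    (ract : M -> R -> M) (lact : R -> N -> N) (tens : M -> N -> T) : Prop :=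
  balanced_on (fun _ => True) ract lact tens /\
  forall (A : zmodType) (f : M -> N -> A),
    balanced_on (fun _ => True) ract lact f ->
    (exists h : T -> A, additive_fun h /\ forall m n, h (tens m n) = f m n) /\
    (forall h1 h2 : T -> A, additive_fun h1 -> additive_fun h2 ->
       (forall m n, h1 (tens m n) = h2 (tens m n)) -> h1 =1 h2).

(* Flatness of the right R-module M (via ract):  M ⊗_R - preserves
   injections of left R-modules. *)
Definition right_flat (R : nzRingType) (M : zmodType) (ract : M -> R -> M) : Prop :=
  forall (N N' : lmodType R) (i : N' -> N),
    additive_fun i -> (forall r x, i (r *: x) = r *: i x) -> injective i ->
    forall xs : seq (M * N'),
      teq ract (fun r (n : N) => r *: n) [seq (p.1, i p.2) | p <- xs] [::] ->
      teq ract (fun r (n : N') => r *: n) xs [::].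

(* G_◁ : right R-module  g ◁ r = t(r) g ;  ▷G : left R-module  r ▷ g = s(r) g *)
Definition ractG (R G : nzRingType) (t : R -> G) : G -> R -> G := fun g r => t r * g.
Definition lactG (R G : nzRingType) (s : R -> G) : R -> G -> G := fun r g => s r * g.

Definition tsum (G : nzRingType) (T : zmodType) (tens : G -> G -> T)
    (xs : seq (G * G)) : T := \sum_(p <- xs) tens p.1 p.2.

(* Balanced triadditive maps on G_◁ ⊗_R ▷G_◁ ⊗_R ▷N (third argument
   restricted to P). *)
Definition balanced3_on (R G : nzRingType) (N A : zmodType) (P : N -> Prop)
    (s t : R -> G) (lactN : R -> N -> N) (f : G -> G -> N -> A) : Prop :=
  [/\ forall a a' b n, P n -> f (a + a') b n = f a b n + f a' b n,
      forall a b b' n, P n -> f a (b + b') n = f a b n + f a b' n,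
      forall a b n n', P n -> P n' -> f a b (n + n') = f a b n + f a b n',
      forall r a b n, P n -> f (t r * a) b n = f a (s r * b) n &
      forall r a b n, P n -> f a (t r * b) n = f a b (lactN r n)].

(* (G, R, s, t, Delta, eps) is a left bialgebroid, Delta : G -> T where
   (T, tens) is G_◁ ⊗_R ▷G.  Statements about Delta g are made through
   an arbitrary presentation  Delta g = sum_i tens a_i b_i. *)
Record is_lbialgebroid (R G : nzRingType) (s : {rmorphism R -> G}) (t : R -> G)
    (T : zmodType) (tens : G -> G -> T) (Delta : G -> T) (eps : G -> R) : Prop :=
  IsLBialgebroid {
  lb_t1 : t 1 = 1;
  lb_tD : forall x y, t (x + y) = t x + t y;
  lb_tM : forall x y, t (x * y) = t y * t x;
  lb_st : forall r r', s r * t r' = t r' * s r;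
  lb_tensor : is_tensor (ractG t) (lactG s) tens;
  lb_DeltaD : additive_fun Delta;
  lb_Delta_bimod : forall r r' g xs, Delta g = tsum tens xs ->
      Delta (s r * t r' * g) = tsum tens [seq (s r * p.1, t r' * p.2) | p <- xs];
  lb_Delta_takeuchi : forall g xs r, Delta g = tsum tens xs ->
      tsum tens [seq (p.1 * t r, p.2) | p <- xs]
      = tsum tens [seq (p.1, p.2 * s r) | p <- xs];
  lb_Delta1 : Delta 1 = tens 1 1;
  lb_DeltaM : forall g g' xs ys, Delta g = tsum tens xs -> Delta g' = tsum tens ys ->
      Delta (g * g') = tsum tens [seq (x.1 * y.1, x.2 * y.2) | x <- xs, y <- ys];
  lb_coassoc : forall g xs (dl dr : G * G -> seq (G * G)),
      Delta g = tsum tens xs ->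
      (forall p, p \in xs -> Delta p.1 = tsum tens (dl p) /\ Delta p.2 = tsum tens (dr p)) ->
      forall (A : zmodType) (f : G -> G -> G -> A),
        balanced3_on (fun _ => True) s t (lactG s) f ->
        \sum_(p <- xs) \sum_(q <- dl p) f q.1 q.2 p.2
        = \sum_(p <- xs) \sum_(q <- dr p) f p.1 q.1 q.2;
  lb_counitl : forall g xs, Delta g = tsum tens xs ->
      \sum_(p <- xs) s (eps p.1) * p.2 = g;
  lb_counitr : forall g xs, Delta g = tsum tens xs ->
      \sum_(p <- xs) t (eps p.2) * p.1 = g;
  lb_epsD : additive_fun eps;
  lb_eps_bimod : forall r r' g, eps (s r * t r' * g) = r * eps g * r';
  lb_eps1 : eps 1 = 1;
  lb_epsM1 : forall g g', eps (g * g') = eps (g * s (eps g'));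
  lb_epsM2 : forall g g', eps (g * g') = eps (g * t (eps g'))
}.

Record is_bialgebroid_surj (R G H : nzRingType)
    (s : {rmorphism R -> G}) (t : R -> G) (T : zmodType) (tens : G -> G -> T)
    (Delta : G -> T) (eps : G -> R)
    (sH : {rmorphism R -> H}) (tH : R -> H) (TH : zmodType) (tensH : H -> H -> TH)
    (DeltaH : H -> TH) (epsH : H -> R) (pi : {rmorphism G -> H}) : Prop :=
  IsBialgebroidSurj {
  bs_surj : forall h, exists g, pi g = h;
  bs_s : forall r, pi (s r) = sH r;
  bs_t : forall r, pi (t r) = tH r;
  bs_Delta : forall g xs, Delta g = tsum tens xs ->
      DeltaH (pi g) = tsum tensH [seq (pi p.1, pi p.2) | p <- xs];
  bs_eps : forall g, epsH (pi g) = eps g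
}.

(* Left Hopf kernel: g_(1) ⊗_R pi(g_(2)) = g ⊗_R 1  in  G_◁ ⊗_R ▷H. *)
Definition hopf_kernel (R G H : nzRingType) (t : R -> G) (sH : R -> H)
    (pi : G -> H) (T : zmodType) (tens : G -> G -> T) (Delta : G -> T) (g : G) : Prop :=
  forall xs, Delta g = tsum tens xs ->
    teq (ractG t) (fun r (h : H) => sH r * h) [seq (p.1, pi p.2) | p <- xs] [:: (g, 1)].

(* xs presents lambda_B(b) as an element of G_◁ ⊗_R B *)
Definition coact_rep (G : nzRingType) (T : zmodType) (tens : G -> G -> T)
    (Delta : G -> T) (B : G -> Prop) (b : G) (xs : seq (G * G)) : Prop :=
  (forall p, p \in xs -> B p.2) /\ Delta b = tsum tens xs.

Record is_comodule_algebra_Delta (R G : nzRingType) (s : {rmorphism R -> G})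
    (t : R -> G) (T : zmodType) (tens : G -> G -> T) (Delta : G -> T)
    (eps : G -> R) (B : G -> Prop) : Prop :=
  IsComodAlg {
  ca_B0 : B 0;
  ca_BB : forall x y, B x -> B y -> B (x - y);
  ca_B1 : B 1;
  ca_BM : forall x y, B x -> B y -> B (x * y);
  ca_Bs : forall r, B (s r);
  ca_val : forall b, B b -> exists xs, coact_rep tens Delta B b xs;
  ca_add : forall b b' xs ys zs, B b -> B b' ->
      coact_rep tens Delta B b xs -> coact_rep tens Delta B b' ys ->
      coact_rep tens Delta B (b + b') zs ->
      teq_on B (ractG t) (lactG s) zs (xs ++ ys);
  ca_lin : forall r b xs ys, B b ->
      coact_rep tens Delta B b xs -> coact_rep tens Delta B (s r * b) ys ->
      teq_on B (ractG t) (lactG s) ys [seq (s r * p.1, p.2) | p <- xs];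
  ca_coassoc : forall b xs (dl dr : G * G -> seq (G * G)), B b ->
      coact_rep tens Delta B b xs ->
      (forall p, p \in xs -> Delta p.1 = tsum tens (dl p) /\
                             coact_rep tens Delta B p.2 (dr p)) ->
      forall (A : zmodType) (f : G -> G -> G -> A),
        balanced3_on B s t (lactG s) f ->
        \sum_(p <- xs) \sum_(q <- dl p) f q.1 q.2 p.2
        = \sum_(p <- xs) \sum_(q <- dr p) f p.1 q.1 q.2;
  ca_counit : forall b xs, B b -> coact_rep tens Delta B b xs ->
      \sum_(p <- xs) s (eps p.1) * p.2 = b;
  ca_unit : forall xs, coact_rep tens Delta B 1 xs ->
      teq_on B (ractG t) (lactG s) xs [:: (1, 1)];
  ca_mul : forall b b' xs ys zs, B b -> B b' ->
      coact_rep tens Delta B b xs -> coact_rep tens Delta B b' ys ->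
      coact_rep tens Delta B (b * b') zs ->
      teq_on B (ractG t) (lactG s) zs
        [seq (x.1 * y.1, x.2 * y.2) | x <- xs, y <- ys]
}.

From HB Require Import structures.
From mathcomp Require Import all_boot all_order all_algebra.
From mathcomp Require Import boolp.

Set Implicit Arguments.
Unset Strict Implicit.
Unset Printing Implicit Defensive.

Import GRing.Theory.
Local Open Scope ring_scope.

(* Write Delta g = g_(1) ⊗ g_(2). Applying suitable balanced maps to the identity
   g_(1) ⊗ pi(g_(2)) = g ⊗ 1 that defines the left Hopf kernel B shows that B is an
   R-subring, that eps(b t(r)) = eps(b) r, hence eps(b g) = eps(b) eps(g), and that
   pi(b) = s_H(eps b) for b in B; in particular pi kills G B^+.
   The map g |-> g_(1) ⊗ pi(g_(2)) - g ⊗ 1 has kernel exactly B, so it embeds G/B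
   into G ⊗_R H. Flatness of G_◁ keeps G ⊗_R G/B -> G ⊗_R G ⊗_R H injective, and
   coassociativity sends Delta(b) to 0 there; by right exactness of G ⊗_R -,
   Delta(b) comes from G ⊗_R B. Flatness also makes G ⊗_R B -> G ⊗_R G and
   G ⊗_R G ⊗_R B -> G ⊗_R G ⊗_R G injective, so the comodule-algebra axioms of
   Delta|_B are inherited from those of Delta.
   Finally, for y in B^+ one has y_(1) ⊗ y_(2) = y_(1) ⊗ (y_(2) - s(eps y_(2))) + y ⊗ 1
   with y_(2) - s(eps y_(2)) in B^+, so Delta(g y) lies in G B^+ ⊗ G + G ⊗ G B^+. *)

Section AdditiveFun.
Variables (U V : zmodType) (h : U -> V).
Hypothesis h_add : additive_fun h.

Lemma additive_fun0 : h 0 = 0.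
Proof. by apply: (addrI (h 0)); rewrite -h_add !addr0. Qed.

Lemma additive_funN x : h (- x) = - h x.
Proof. by apply: (addrI (h x)); rewrite -h_add !subrr additive_fun0. Qed.

Lemma additive_funB x y : h (x - y) = h x - h y.
Proof. by rewrite h_add additive_funN. Qed.

Lemma additive_fun_sum I (r : seq I) (F : I -> U) :
  h (\sum_(i <- r) F i) = \sum_(i <- r) h (F i).
Proof. by elim: r => [|i r IH]; rewrite ?big_nil ?additive_fun0 // !big_cons h_add IH. Qed.

End AdditiveFun.

Section LeftIdealSpan.
Variables (G : nzRingType) (P : G -> Prop).

Definition left_ideal_span (x : G) :=
  exists xs : seq (G * G), (forall p, p \in xs -> P p.2) /\ x = \sum_(p <- xs) p.1 * p.2.

Lemma left_ideal_span0 : left_ideal_span 0.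
Proof. by exists [::]; rewrite big_nil. Qed.

Lemma left_ideal_spanD x y :
  left_ideal_span x -> left_ideal_span y -> left_ideal_span (x + y).
Proof.
move=> [xs [Pxs ->]] [ys [Pys ->]]; exists (xs ++ ys); rewrite big_cat.
by split=> // p; rewrite mem_cat => /orP [/Pxs | /Pys].
Qed.

Lemma left_ideal_spanMl g x : left_ideal_span x -> left_ideal_span (g * x).
Proof.
move=> [xs [Pxs ->]]; exists (map (fun p => (g * p.1, p.2)) xs); split.
  by move=> _ /mapP [p /Pxs Pp ->].
by rewrite big_map mulr_sumr; apply: eq_bigr => p _; rewrite mulrA.
Qed.

Lemma left_ideal_span_gen g y : P y -> left_ideal_span (g * y).
Proof.
by move=> Py; exists [:: (g, y)]; rewrite big_seq1; split=> // p /[!inE] /eqP ->.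
Qed.

Lemma left_ideal_span_ind (Q : G -> Prop) :
  Q 0 -> (forall x y, Q x -> Q y -> Q (x + y)) -> (forall g y, P y -> Q (g * y)) ->
  forall x, left_ideal_span x -> Q x.
Proof.
move=> Q0 QD Qgen _ [xs [Pxs ->]]; elim: xs Pxs => [|p xs IH] Pxs; first by rewrite big_nil.
rewrite big_cons; apply: QD; first by apply: Qgen; apply: Pxs; rewrite mem_head.
by apply: IH => q qxs; apply: Pxs; rewrite in_cons qxs orbT.
Qed.

End LeftIdealSpan.

Section Balanced.
Variables (R : nzRingType) (M N A : zmodType) (P : N -> Prop).
Variables (ract : M -> R -> M) (lact : R -> N -> N) (f : M -> N -> A).
Hypothesis f_bal : balanced_on P ract lact f.

Lemma balanced_addl m m' n : P n -> f (m + m') n = f m n + f m' n.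
Proof. by case: f_bal => _ + _; apply. Qed.

Lemma balanced_addr m n n' : P n -> P n' -> f m (n + n') = f m n + f m n'.
Proof. by case: f_bal => + _ _; apply. Qed.

Lemma balanced_act m r n : P n -> f (ract m r) n = f m (lact r n).
Proof. by case: f_bal => _ _; apply. Qed.

Lemma balanced_0l n : P n -> f 0 n = 0.
Proof. by move=> Pn; apply: (addrI (f 0 n)); rewrite -balanced_addl // !addr0. Qed.

Lemma balanced_oppl m n : P n -> f (- m) n = - f m n.
Proof.
by move=> Pn; apply: (addrI (f m n)); rewrite -balanced_addl // !subrr balanced_0l.
Qed.

Lemma balanced_suml I (r : seq I) (F : I -> M) n : P n ->
  f (\sum_(i <- r) F i) n = \sum_(i <- r) f (F i) n.
Proof.
move=> Pn; elim: r => [|i r IH]; first by rewrite !big_nil balanced_0l.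
by rewrite !big_cons balanced_addl // IH.
Qed.

End Balanced.

Section BalancedTotal.
Variables (R : nzRingType) (M N A : zmodType).
Variables (ract : M -> R -> M) (lact : R -> N -> N) (f : M -> N -> A).
Hypothesis f_bal : balanced_on (fun _ => True) ract lact f.

Lemma balanced_0r m : f m 0 = 0.
Proof. by apply: (addrI (f m 0)); rewrite -(balanced_addr f_bal) // !addr0. Qed.

Lemma balanced_oppr m n : f m (- n) = - f m n.
Proof.
by apply: (addrI (f m n)); rewrite -(balanced_addr f_bal) // !subrr balanced_0r.
Qed.

Lemma balanced_subr m n n' : f m (n - n') = f m n - f m n'.
Proof. by rewrite (balanced_addr f_bal) // balanced_oppr. Qed.

Lemma balanced_sumr I (r : seq I) (F : I -> N) m :
  f m (\sum_(i <- r) F i) = \sum_(i <- r) f m (F i).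
Proof.
elim: r => [|i r IH]; first by rewrite !big_nil balanced_0r.
by rewrite !big_cons (balanced_addr f_bal) // IH.
Qed.

End BalancedTotal.

Definition map_snd (A B C : Type) (i : B -> C) (xs : seq (A * B)) :=
  [seq (p.1, i p.2) | p <- xs].

Definition formal_opp {M N : zmodType} (xs : seq (M * N)) := [seq (- p.1, p.2) | p <- xs].

Lemma sum_formal_opp (R : nzRingType) (M N A : zmodType) (P : N -> Prop)
    (ract : M -> R -> M) (lact : R -> N -> N) (f : M -> N -> A) xs :
  balanced_on P ract lact f -> (forall p, p \in xs -> P p.2) ->
  \sum_(p <- formal_opp xs) f p.1 p.2 = - \sum_(p <- xs) f p.1 p.2.
Proof.
move=> fb Pxs; rewrite big_map -sumrN; apply: eq_big_seq => p /Pxs.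
exact: balanced_oppl fb _ _.
Qed.

Section TensorEquality.
Variables (R : nzRingType) (M N : zmodType) (P : N -> Prop).
Variables (ract : M -> R -> M) (lact : R -> N -> N).
Local Notation E := (teq_on P ract lact).

Lemma teq_sym xs ys : E xs ys -> E ys xs.
Proof. by move=> Exy A f fb; rewrite Exy. Qed.

Lemma teq_trans xs ys zs : E xs ys -> E ys zs -> E xs zs.
Proof. by move=> Exy Eyz A f fb; rewrite Exy // Eyz. Qed.

Lemma teq_cat xs xs' ys ys' : E xs xs' -> E ys ys' -> E (xs ++ ys) (xs' ++ ys').
Proof. by move=> Ex Ey A f fb; rewrite !big_cat Ex // Ey. Qed.

End TensorEquality.

(** * Setoid quotients *)

Record zmod_setoid (X : Type) := ZmodSetoid {
  setoid_rel : X -> X -> Prop;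
  setoid_zero : X;
  setoid_add : X -> X -> X;
  setoid_opp : X -> X;
  setoid_refl : forall x, setoid_rel x x;
  setoid_sym : forall x y, setoid_rel x y -> setoid_rel y x;
  setoid_trans : forall x y z, setoid_rel x y -> setoid_rel y z -> setoid_rel x z;
  setoid_addE : forall x x' y y', setoid_rel x x' -> setoid_rel y y' ->
    setoid_rel (setoid_add x y) (setoid_add x' y');
  setoid_oppE : forall x x', setoid_rel x x' -> setoid_rel (setoid_opp x) (setoid_opp x');
  setoid_addA : forall x y z,
    setoid_rel (setoid_add x (setoid_add y z)) (setoid_add (setoid_add x y) z);
  setoid_addC : forall x y, setoid_rel (setoid_add x y) (setoid_add y x);
  setoid_add0 : forall x, setoid_rel (setoid_add setoid_zero x) x;
  setoid_addN : forall x, setoid_rel (setoid_add (setoid_opp x) x) setoid_zero }.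

(* Equivalence classes are represented by predicates; they are compared with
   propositional and functional extensionality. *)
Definition setoid_quot (X : Type) (e : zmod_setoid X) : Type :=
  {P : X -> Prop | exists x, P = setoid_rel e x}.
HB.instance Definition _ X (e : zmod_setoid X) := gen_eqMixin (setoid_quot e).
HB.instance Definition _ X (e : zmod_setoid X) := gen_choiceMixin (setoid_quot e).

Section SetoidQuotient.
Variables (X : Type) (e : zmod_setoid X).
Local Notation E := (setoid_rel e).
Local Notation Q := (setoid_quot e).

Definition setoid_pi (x : X) : Q := exist _ (E x) (ex_intro _ x erefl).
Definition setoid_repr (q : Q) : X := projT1 (cid (proj2_sig q)).

Lemma setoid_piP x y : setoid_pi x = setoid_pi y <-> E x y.
Proof.
split=> [/(f_equal sval) /= /(congr1 (fun P => P y)) -> | Exy]; first exact: setoid_refl.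
apply: eq_exist; apply/funext => z; apply/propext.
by split; [apply: setoid_trans (setoid_sym Exy) | apply: setoid_trans Exy].
Qed.

Lemma setoid_reprK : cancel setoid_repr setoid_pi.
Proof.
by case=> P hP; rewrite /setoid_repr /=; case: (cid hP) => x /= PE; apply: eq_exist.
Qed.

Lemma setoid_pi_repr x : E (setoid_repr (setoid_pi x)) x.
Proof. by apply/setoid_piP; rewrite setoid_reprK. Qed.

Definition setoid_quot_add (a b : Q) :=
  setoid_pi (setoid_add e (setoid_repr a) (setoid_repr b)).
Definition setoid_quot_opp (a : Q) := setoid_pi (setoid_opp e (setoid_repr a)).
Definition setoid_quot_zero := setoid_pi (setoid_zero e).

Lemma setoid_quot_addE x y :
  setoid_quot_add (setoid_pi x) (setoid_pi y) = setoid_pi (setoid_add e x y).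
Proof. by apply/setoid_piP; apply: setoid_addE; apply: setoid_pi_repr. Qed.

Lemma setoid_quot_oppE x : setoid_quot_opp (setoid_pi x) = setoid_pi (setoid_opp e x).
Proof. by apply/setoid_piP; apply: setoid_oppE; apply: setoid_pi_repr. Qed.

Lemma setoid_quot_addA : associative setoid_quot_add.
Proof.
move=> a b c; rewrite -[a]setoid_reprK -[b]setoid_reprK -[c]setoid_reprK.
by rewrite !setoid_quot_addE; apply/setoid_piP; apply: setoid_addA.
Qed.

Lemma setoid_quot_addC : commutative setoid_quot_add.
Proof.
move=> a b; rewrite -[a]setoid_reprK -[b]setoid_reprK !setoid_quot_addE.
by apply/setoid_piP; apply: setoid_addC.
Qed.

Lemma setoid_quot_add0 : left_id setoid_quot_zero setoid_quot_add.
Proof.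
move=> a; rewrite -[a]setoid_reprK setoid_quot_addE.
by apply/setoid_piP; apply: setoid_add0.
Qed.

Lemma setoid_quot_addN : left_inverse setoid_quot_zero setoid_quot_opp setoid_quot_add.
Proof.
move=> a; rewrite -[a]setoid_reprK setoid_quot_oppE setoid_quot_addE.
by apply/setoid_piP; apply: setoid_addN.
Qed.

End SetoidQuotient.

HB.instance Definition _ X (e : zmod_setoid X) :=
  GRing.isZmodule.Build (setoid_quot e)
    (@setoid_quot_addA X e) (@setoid_quot_addC X e)
    (@setoid_quot_add0 X e) (@setoid_quot_addN X e).

Section SetoidQuotientZmod.
Variables (X : Type) (e : zmod_setoid X).

Lemma setoid_piD x y : setoid_pi e x + setoid_pi e y = setoid_pi e (setoid_add e x y).
Proof. exact: setoid_quot_addE. Qed.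

Lemma setoid_pi0 : setoid_pi e (setoid_zero e) = 0.
Proof. by []. Qed.

End SetoidQuotientZmod.

Record lmod_setoid (R : nzRingType) (X : Type) := LmodSetoid {
  setoid_zmod :> zmod_setoid X;
  setoid_scale : R -> X -> X;
  setoid_scaleE : forall r x x', setoid_rel setoid_zmod x x' ->
    setoid_rel setoid_zmod (setoid_scale r x) (setoid_scale r x');
  setoid_scaleA : forall a b x,
    setoid_rel setoid_zmod (setoid_scale a (setoid_scale b x)) (setoid_scale (a * b) x);
  setoid_scale1 : forall x, setoid_rel setoid_zmod (setoid_scale 1 x) x;
  setoid_scaleDr : forall a x y, setoid_rel setoid_zmod
    (setoid_scale a (setoid_add setoid_zmod x y))
    (setoid_add setoid_zmod (setoid_scale a x) (setoid_scale a y));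
  setoid_scaleDl : forall a b x, setoid_rel setoid_zmod (setoid_scale (a + b) x)
    (setoid_add setoid_zmod (setoid_scale a x) (setoid_scale b x)) }.

Definition lsetoid_quot (R : nzRingType) (X : Type) (e : lmod_setoid R X) : Type :=
  setoid_quot e.
HB.instance Definition _ R X (e : lmod_setoid R X) := GRing.Zmodule.on (lsetoid_quot e).

Section LmodSetoidQuotient.
Variables (R : nzRingType) (X : Type) (e : lmod_setoid R X).
Local Notation Q := (lsetoid_quot e).
Local Notation pi := (setoid_pi e).

Definition setoid_quot_scale (r : R) (a : Q) : Q := pi (setoid_scale e r (setoid_repr a)).

Lemma setoid_quot_scaleE r x : setoid_quot_scale r (pi x) = pi (setoid_scale e r x).
Proof. by apply/setoid_piP; apply: setoid_scaleE; apply: setoid_pi_repr. Qed.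

Lemma setoid_quot_scaleA a b v :
  setoid_quot_scale a (setoid_quot_scale b v) = setoid_quot_scale (a * b) v.
Proof.
rewrite -[v]setoid_reprK !setoid_quot_scaleE.
by apply/setoid_piP; apply: setoid_scaleA.
Qed.

Lemma setoid_quot_scale1 : left_id 1 setoid_quot_scale.
Proof.
move=> v; rewrite -[v]setoid_reprK setoid_quot_scaleE.
by apply/setoid_piP; apply: setoid_scale1.
Qed.

Lemma setoid_quot_scaleDr : right_distributive setoid_quot_scale +%R.
Proof.
move=> a u v; rewrite -[u]setoid_reprK -[v]setoid_reprK /=.
rewrite setoid_piD !setoid_quot_scaleE setoid_piD.
by apply/setoid_piP; apply: setoid_scaleDr.
Qed.

Lemma setoid_quot_scaleDl v : {morph setoid_quot_scale^~ v : a b / a + b}.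
Proof.
move=> a b; rewrite -[v]setoid_reprK /= !setoid_quot_scaleE setoid_piD.
by apply/setoid_piP; apply: setoid_scaleDl.
Qed.

End LmodSetoidQuotient.

HB.instance Definition _ R X (e : lmod_setoid R X) :=
  GRing.Zmodule_isLmodule.Build R (lsetoid_quot e)
    (@setoid_quot_scaleA R X e) (@setoid_quot_scale1 R X e)
    (@setoid_quot_scaleDr R X e) (@setoid_quot_scaleDl R X e).

Lemma setoid_piZ (R : nzRingType) (X : Type) (e : lmod_setoid R X) r x :
  r *: (setoid_pi e x : lsetoid_quot e) = setoid_pi e (setoid_scale e r x).
Proof. exact: setoid_quot_scaleE. Qed.

(** * Quotient modules and submodules *)

Record is_subgroup (V : zmodType) (S : V -> Prop) : Prop := IsSubgroup {
  subgroup0 : S 0;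
  subgroupB : forall x y, S x -> S y -> S (x - y) }.

Record is_submodule (R : nzRingType) (V : lmodType R) (S : V -> Prop) : Prop :=
  IsSubmodule {
  submodule_subgroup :> is_subgroup S;
  submoduleZ : forall r x, S x -> S (r *: x) }.

Section SubgroupQuotient.
Variables (V : zmodType) (S : V -> Prop) (S_sub : is_subgroup S).

Lemma subgroupN x : S x -> S (- x).
Proof. by move=> Sx; rewrite -sub0r; apply: subgroupB => //; exact: subgroup0 S_sub. Qed.

Lemma subgroupD x y : S x -> S y -> S (x + y).
Proof. by move=> Sx Sy; rewrite -[y]opprK; apply: subgroupB => //; apply: subgroupN. Qed.

Definition quot_setoid : zmod_setoid V.
Proof.
refine (@ZmodSetoid V (fun x y => S (x - y)) 0 +%R -%R _ _ _ _ _ _ _ _ _) => /=.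
- by move=> x; rewrite subrr; exact: subgroup0 S_sub.
- by move=> x y Sxy; rewrite -opprB; apply: subgroupN.
- by move=> x y z Sxy Syz; rewrite -[x](subrK y) -addrA; apply: subgroupD.
- by move=> x x' y y' Sx Sy; rewrite opprD addrACA; apply: subgroupD.
- by move=> x x' Sx; rewrite -opprD; apply: subgroupN.
- by move=> x y z; rewrite addrA subrr; exact: subgroup0 S_sub.
- by move=> x y; rewrite [x + y]addrC subrr; exact: subgroup0 S_sub.
- by move=> x; rewrite add0r subrr; exact: subgroup0 S_sub.
- by move=> x; rewrite addNr subrr; exact: subgroup0 S_sub.
Defined.

Local Notation pi := (setoid_pi quot_setoid).

Lemma quot_piD x y : pi (x + y) = pi x + pi y.
Proof. by rewrite setoid_piD. Qed.

Lemma quot_pi_sum I (r : seq I) (F : I -> V) :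
  pi (\sum_(i <- r) F i) = \sum_(i <- r) pi (F i).
Proof. by elim: r => [|i r IH]; rewrite ?big_nil // !big_cons quot_piD IH. Qed.

Lemma quot_piP x y : pi x = pi y <-> S (x - y).
Proof. exact: setoid_piP. Qed.

Lemma quot_pi_eq0 x : pi x = 0 <-> S x.
Proof. by rewrite -setoid_pi0 quot_piP /= subr0. Qed.

End SubgroupQuotient.

Section SubmoduleQuotient.
Variables (R : nzRingType) (V : lmodType R) (S : V -> Prop) (S_sub : is_submodule S).

Definition quot_lsetoid : lmod_setoid R V.
Proof.
refine (@LmodSetoid R V (quot_setoid S_sub) (fun r x => r *: x) _ _ _ _ _);
  rewrite /quot_setoid /=.
- by move=> r x x' Sx; rewrite -scalerBr; apply: submoduleZ S_sub _ _ Sx.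
- by move=> a b x; rewrite scalerA subrr; exact: subgroup0 S_sub.
- by move=> x; rewrite scale1r subrr; exact: subgroup0 S_sub.
- by move=> a x y; rewrite scalerDr subrr; exact: subgroup0 S_sub.
- by move=> a b x; rewrite scalerDl subrr; exact: subgroup0 S_sub.
Defined.

Definition quot_mod : lmodType R := lsetoid_quot quot_lsetoid.
Definition quot_mod_pi (x : V) : quot_mod := setoid_pi quot_lsetoid x.

Lemma quot_mod_piZ r x : quot_mod_pi (r *: x) = r *: quot_mod_pi x.
Proof. by rewrite /quot_mod_pi setoid_piZ. Qed.

Lemma quot_mod_pi_repr (q : quot_mod) : quot_mod_pi (setoid_repr q) = q.
Proof. exact: setoid_reprK. Qed.

Variables (W : lmodType R) (phi : V -> W).
Hypotheses (phi_add : additive_fun phi) (phiZ : forall r x, phi (r *: x) = r *: phi x).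
Hypothesis phi_ker : forall x, phi x = 0 <-> S x.

Definition quot_induced (q : quot_mod) : W := phi (setoid_repr q).

Lemma quot_inducedE x : quot_induced (quot_mod_pi x) = phi x.
Proof.
rewrite /quot_induced; apply/eqP; rewrite -subr_eq0 -additive_funB //; apply/eqP/phi_ker.
exact: (setoid_pi_repr quot_lsetoid x).
Qed.

Lemma quot_induced_add : additive_fun quot_induced.
Proof.
move=> p q; rewrite -[p]quot_mod_pi_repr -[q]quot_mod_pi_repr.
by rewrite -(quot_piD S_sub) -/(quot_mod_pi _) !quot_inducedE.
Qed.

Lemma quot_inducedZ r q : quot_induced (r *: q) = r *: quot_induced q.
Proof. by rewrite -[q]quot_mod_pi_repr -quot_mod_piZ !quot_inducedE. Qed.

Lemma quot_induced_inj : injective quot_induced.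
Proof.
move=> p q; rewrite -[p]quot_mod_pi_repr -[q]quot_mod_pi_repr !quot_inducedE => Ephi.
by apply/(quot_piP S_sub)/phi_ker; rewrite additive_funB // Ephi subrr.
Qed.

End SubmoduleQuotient.

Definition submod_pred (R : nzRingType) (V : lmodType R) (S : V -> Prop)
  (S_sub : is_submodule S) : pred V := fun x => `[< S x >].

Lemma submod_pred_closed (R : nzRingType) (V : lmodType R) (S : V -> Prop)
  (S_sub : is_submodule S) : GRing.submod_closed (submod_pred S_sub).
Proof.
split=> [|r x y]; rewrite !unfold_in /submod_pred.
  by apply/asboolP; apply: subgroup0 S_sub.
move=> /asboolP Sx /asboolP Sy; apply/asboolP; rewrite -[y]opprK.
exact: subgroupB S_sub _ _ (submoduleZ S_sub r Sx) (subgroupN S_sub Sy).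
Qed.

HB.instance Definition _ (R : nzRingType) (V : lmodType R) S S_sub :=
  GRing.isSubmodClosed.Build R V (@submod_pred R V S S_sub) (submod_pred_closed S_sub).

Definition submod_type (R : nzRingType) (V : lmodType R) (S : V -> Prop)
  (S_sub : is_submodule S) : Type := {x : V | x \in submod_pred S_sub}.
HB.instance Definition _ (R : nzRingType) (V : lmodType R) S S_sub :=
  [isSub for @proj1_sig V (fun x => x \in @submod_pred R V S S_sub)
     : submod_type S_sub -> V].
HB.instance Definition _ (R : nzRingType) (V : lmodType R) S S_sub :=
  [Choice of @submod_type R V S S_sub by <:].
HB.instance Definition _ (R : nzRingType) (V : lmodType R) S S_sub :=
  [SubChoice_isSubLmodule of @submod_type R V S S_sub by <:].

Lemma submod_valP (R : nzRingType) (V : lmodType R) (S : V -> Prop)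
  (S_sub : is_submodule S) (u : submod_type S_sub) : S (val u).
Proof. by have := valP u; rewrite unfold_in => /asboolP. Qed.

Lemma submod_insubdK (R : nzRingType) (V : lmodType R) (S : V -> Prop)
  (S_sub : is_submodule S) v : S v -> val (insubd (0 : submod_type S_sub) v) = v.
Proof. by move=> Sv; rewrite insubdK // unfold_in; apply/asboolP. Qed.

Lemma map_snd_insubdK (R : nzRingType) (V : lmodType R) (S : V -> Prop)
    (S_sub : is_submodule S) (A : eqType) (zs : seq (A * V)) :
  (forall p, p \in zs -> S p.2) ->
  map_snd val (map_snd (insubd (0 : submod_type S_sub)) zs) = zs.
Proof.
move=> Szs; rewrite /map_snd -map_comp -[RHS]map_id.
by apply/eq_in_map => -[a v] /Szs /(submod_insubdK S_sub) /= ->.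
Qed.

Lemma balanced_val (R : nzRingType) (M : zmodType) (V : lmodType R) (A : zmodType)
    (S : V -> Prop) (S_sub : is_submodule S) (ract : M -> R -> M) (f : M -> V -> A) :
  balanced_on S ract (fun r (v : V) => r *: v) f ->
  balanced_on (fun _ => True) ract (fun r (u : submod_type S_sub) => r *: u)
    (fun m u => f m (val u)).
Proof.
move=> fb; split=> [m u u' _ _|m m' u _|m r u _]; rewrite ?GRing.valD ?GRing.valZ.
- by rewrite (balanced_addr fb) //; apply: submod_valP.
- by rewrite (balanced_addl fb) //; apply: submod_valP.
- by rewrite (balanced_act fb) //; apply: submod_valP.
Qed.

(** * Formal tensor products *)

Definition ract_scale_comm (R : nzRingType) (M : lmodType R) (ract : M -> R -> M) :=
  forall r r' m, r *: ract m r' = ract (r *: m) r'.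

Section FormalTensor.
Variables (R : nzRingType) (M : lmodType R) (N : zmodType).
Variables (ract : M -> R -> M) (lact : R -> N -> N).
Hypothesis scale_ract : ract_scale_comm ract.
Local Notation balanced := (balanced_on (fun _ => True) ract lact).

Definition formal_scale r (xs : seq (M * N)) := [seq (r *: p.1, p.2) | p <- xs].

Lemma balanced_scalel (A : zmodType) (f : M -> N -> A) r :
  balanced f -> balanced (fun m n => f (r *: m) n).
Proof.
move=> fb; split=> [m n n' _ _|m m' n _|m r' n _].
- exact: balanced_addr fb _ _ _ _ _.
- by rewrite scalerDr (balanced_addl fb).
- by rewrite scale_ract (balanced_act fb).
Qed.

Definition tensor_zsetoid : zmod_setoid (seq (M * N)).
Proof.
refine (@ZmodSetoid _ (teq ract lact) [::] cat formal_opp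
  (fun _ _ _ _ => erefl) (@teq_sym _ _ _ _ _ _) (@teq_trans _ _ _ _ _ _)
  (@teq_cat _ _ _ _ _ _) _ _ _ _ _).
- by move=> xs xs' Exs A f fb; rewrite !(sum_formal_opp fb) // Exs.
- by move=> xs ys zs; rewrite catA.
- by move=> xs ys A f fb; rewrite !big_cat; apply: addrC.
- by [].
- by move=> xs A f fb; rewrite big_cat (sum_formal_opp fb) // big_nil; apply: addNr.
Defined.

Definition tensor_setoid : lmod_setoid R (seq (M * N)).
Proof.
refine (@LmodSetoid R _ tensor_zsetoid formal_scale _ _ _ _ _).
- move=> r xs xs' Exs A f fb; rewrite !big_map.
  exact: Exs _ (fun m n => f (r *: m) n) (balanced_scalel r fb).
- by move=> a b xs A f fb; rewrite !big_map; apply: eq_bigr => p _; rewrite scalerA.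
- by move=> xs A f fb; rewrite big_map; apply: eq_bigr => p _; rewrite scale1r.
- by move=> r xs ys; rewrite /= /formal_scale map_cat.
- move=> a b xs A f fb; rewrite big_cat !big_map.
  rewrite (eq_bigr (fun p => f (a *: p.1) p.2 + f (b *: p.1) p.2)); first exact: big_split.
  by move=> p _; rewrite scalerDl (balanced_addl fb).
Defined.

End FormalTensor.

(* M ⊗_R N as formal sums modulo [teq]; the left R-action on M makes it a left
   R-module. *)
Definition tensor (R : nzRingType) (M : lmodType R) (N : zmodType)
    (ract : M -> R -> M) (lact : R -> N -> N) (scale_ract : ract_scale_comm ract) :
  lmodType R := lsetoid_quot (tensor_setoid lact scale_ract).

Section FormalTensorTheory.
Variables (R : nzRingType) (M : lmodType R) (N : zmodType).
Variables (ract : M -> R -> M) (lact : R -> N -> N).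
Variable scale_ract : ract_scale_comm ract.
Local Notation balanced := (balanced_on (fun _ => True) ract lact).
Local Notation tensor := (tensor lact scale_ract).

Definition tensor_of (xs : seq (M * N)) : tensor := setoid_pi _ xs.
Definition tmul m n := tensor_of [:: (m, n)].

Lemma tensor_ofP xs ys : tensor_of xs = tensor_of ys <-> teq ract lact xs ys.
Proof. exact: setoid_piP. Qed.

Lemma tensor_of_repr (w : tensor) : tensor_of (setoid_repr w) = w.
Proof. exact: setoid_reprK. Qed.

Lemma tensor_of_cat xs ys : tensor_of (xs ++ ys) = tensor_of xs + tensor_of ys.
Proof. by rewrite /tensor_of setoid_piD. Qed.

Lemma tensor_ofE xs : tensor_of xs = \sum_(p <- xs) tmul p.1 p.2.
Proof.
elim: xs => [|[m n] xs IH]; first by rewrite big_nil.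
by rewrite big_cons -IH -tensor_of_cat.
Qed.

Lemma tensor_ofZ r xs : r *: tensor_of xs = tensor_of (formal_scale r xs).
Proof. exact: setoid_piZ. Qed.

Lemma tmulZ r m n : r *: tmul m n = tmul (r *: m) n.
Proof. exact: tensor_ofZ. Qed.

Lemma tmul_balanced : balanced tmul.
Proof.
split=> [m n n' _ _|m m' n _|m r n _]; rewrite /tmul -?tensor_of_cat; apply/tensor_ofP.
- by move=> A f fb; rewrite big_cat !big_seq1 /= (balanced_addr fb).
- by move=> A f fb; rewrite big_cat !big_seq1 /= (balanced_addl fb).
- by move=> A f fb; rewrite !big_seq1 /= (balanced_act fb).
Qed.

Definition tensor_lift (A : zmodType) (f : M -> N -> A) (w : tensor) : A :=
  \sum_(p <- setoid_repr w) f p.1 p.2.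

Lemma tensor_liftE (A : zmodType) (f : M -> N -> A) xs : balanced f ->
  tensor_lift f (tensor_of xs) = \sum_(p <- xs) f p.1 p.2.
Proof. by move=> fb; apply: (setoid_pi_repr (tensor_setoid lact scale_ract) xs). Qed.

End FormalTensorTheory.

Section TensorMap.
Variables (R : nzRingType) (M : zmodType) (N N' : zmodType) (ract : M -> R -> M).
Variables (lact : R -> N -> N) (lact' : R -> N' -> N') (i : N' -> N).
Hypotheses (i_add : additive_fun i) (i_act : forall r n, i (lact' r n) = lact r (i n)).

Lemma teq_map_snd xs ys :
  teq ract lact' xs ys -> teq ract lact (map_snd i xs) (map_snd i ys).
Proof.
move=> Exy A f fb; rewrite !big_map; apply: (Exy A (fun m n => f m (i n))).
split=> [m n n' _ _|m m' n _|m r n _].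
- by rewrite i_add (balanced_addr fb).
- exact: balanced_addl fb _ _ _ _.
- by rewrite i_act (balanced_act fb).
Qed.

End TensorMap.

Section FormalTensorMap.
Variables (R : nzRingType) (M : lmodType R) (N N' : zmodType) (ract : M -> R -> M).
Variables (lact : R -> N -> N) (lact' : R -> N' -> N') (scale_ract : ract_scale_comm ract).
Variable i : N' -> N.
Hypotheses (i_add : additive_fun i) (i_act : forall r n, i (lact' r n) = lact r (i n)).

Definition tensor_map (w : tensor lact' scale_ract) : tensor lact scale_ract :=
  tensor_of lact scale_ract (map_snd i (setoid_repr w)).

Lemma tensor_mapE xs :
  tensor_map (tensor_of lact' scale_ract xs) = tensor_of lact scale_ract (map_snd i xs).
Proof.
apply/tensor_ofP; apply: teq_map_snd => //.
exact: (setoid_pi_repr (tensor_setoid lact' scale_ract) xs).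
Qed.

Lemma tensor_map_add : additive_fun tensor_map.
Proof.
move=> v w; rewrite -[v]tensor_of_repr -[w]tensor_of_repr -tensor_of_cat !tensor_mapE.
by rewrite /map_snd map_cat tensor_of_cat.
Qed.

Lemma tensor_mapZ r w : tensor_map (r *: w) = r *: tensor_map w.
Proof.
rewrite -[w]tensor_of_repr tensor_ofZ !tensor_mapE tensor_ofZ.
by rewrite /map_snd /formal_scale -!map_comp.
Qed.

End FormalTensorMap.

Arguments tensor_map {R M N N' ract} lact lact' scale_ract i w.

(** * Tensor products and flatness *)

Section TensorProduct.
Variables (R : nzRingType) (M N T : zmodType) (ract : M -> R -> M) (lact : R -> N -> N).
Variable tens : M -> N -> T.
Hypothesis tensT : is_tensor ract lact tens.
Local Notation tsumT xs := (\sum_(p <- xs) tens p.1 p.2).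

Lemma tensor_balanced : balanced_on (fun _ => True) ract lact tens.
Proof. by case: tensT. Qed.

Lemma tensor_sum_teq xs ys : tsumT xs = tsumT ys -> teq ract lact xs ys.
Proof.
move=> Exy A f fb; case: tensT => _ /(_ A f fb) [[h [h_add htens]] _].
have sumE zs : \sum_(p <- zs) f p.1 p.2 = h (tsumT zs).
  by rewrite (additive_fun_sum h_add); apply: eq_bigr => p _; rewrite htens.
by rewrite !sumE Exy.
Qed.

Lemma tensor_sum_surj (x : T) : exists xs, x = tsumT xs.
Proof.
pose S w := exists xs, w = tsumT xs.
have S_sub : is_subgroup S.
  split=> [|_ _ [xs ->] [ys ->]]; first by exists [::]; rewrite big_nil.
  exists (xs ++ formal_opp ys); rewrite big_cat (sum_formal_opp tensor_balanced) //.
have fb : balanced_on (fun _ => True) ract lact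
    (fun _ _ => 0 : setoid_quot (quot_setoid S_sub)).
  by split=> *; rewrite ?addr0.
(* The projection T -> T/S and the zero map agree on pure tensors. *)
case: tensT => _ /(_ _ _ fb) [_ /(_ (setoid_pi _) (fun _ => 0))] pi_eq0.
apply/(quot_pi_eq0 S_sub)/pi_eq0 => [u v|u v|m n]; rewrite ?addr0 ?quot_piD //.
by apply/quot_pi_eq0; exists [:: (m, n)]; rewrite big_seq1.
Qed.

End TensorProduct.

Section TensorQuotient.
Variables (R : nzRingType) (M : zmodType) (V : lmodType R) (T : zmodType).
Variables (ract : M -> R -> M) (tens : M -> V -> T).
Hypothesis tensT : is_tensor ract (fun r (v : V) => r *: v) tens.
Variables (S : V -> Prop) (S_sub : is_submodule S).
Local Notation tsumT xs := (\sum_(p <- xs) tens p.1 p.2).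

Definition tensor_image (w : T) := exists ys, (forall p, p \in ys -> S p.2) /\ w = tsumT ys.

Lemma tensor_image_subgroup : is_subgroup tensor_image.
Proof.
have tb := tensor_balanced tensT.
split=> [|_ _ [xs [Sxs ->]] [ys [Sys ->]]]; first by exists [::]; rewrite big_nil.
exists (xs ++ formal_opp ys); split; last by rewrite big_cat (sum_formal_opp tb).
by move=> p; rewrite mem_cat => /orP [/Sxs | /mapP [q /Sys Sq ->]].
Qed.

Lemma tensor_quot_nil xs :
  teq ract (fun r (q : quot_mod S_sub) => r *: q) (map_snd (quot_mod_pi S_sub) xs) [::] ->
  tensor_image (tsumT xs).
Proof.
have tb := tensor_balanced tensT.
pose piT w := setoid_pi (quot_setoid tensor_image_subgroup) w.
have piT_tens m v v' : S (v - v') -> piT (tens m v) = piT (tens m v').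
  move=> Sv; apply/quot_piP; rewrite -(balanced_subr tb).
  by exists [:: (m, v - v')]; split; [move=> p /[!inE] /eqP -> | rewrite big_seq1].
(* Right exactness: m ⊗ [v] |-> [m ⊗ v] is well defined on M ⊗_R V/S. *)
pose f m (q : quot_mod S_sub) := piT (tens m (setoid_repr q)).
have fE m v : f m (quot_mod_pi S_sub v) = piT (tens m v).
  exact/piT_tens/(setoid_pi_repr (quot_lsetoid S_sub)).
have fb : balanced_on (fun _ => True) ract (fun r (q : quot_mod S_sub) => r *: q) f.
  split=> [m q q' _ _|m m' q _|m r q _].
  - rewrite -[q]quot_mod_pi_repr -[q']quot_mod_pi_repr -(quot_piD S_sub).
    by rewrite -/(quot_mod_pi _ _) !fE (balanced_addr tb) // /piT quot_piD.
  - by rewrite /f /piT (balanced_addl tb) // quot_piD.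
  - by rewrite -[q]quot_mod_pi_repr -quot_mod_piZ !fE (balanced_act tb).
move=> /(_ _ f fb); rewrite big_nil big_map.
under eq_bigr do rewrite fE.
by rewrite -quot_pi_sum => /quot_pi_eq0.
Qed.

End TensorQuotient.

Section Flatness.
Variables (R : nzRingType) (M : zmodType) (ract : M -> R -> M).
Hypothesis M_flat : right_flat ract.

Lemma flat_teq_inj (N N' : lmodType R) (i : N' -> N) :
    additive_fun i -> (forall r x, i (r *: x) = r *: i x) -> injective i ->
  forall xs ys, teq ract (fun r (n : N) => r *: n) (map_snd i xs) (map_snd i ys) ->
    teq ract (fun r (n : N') => r *: n) xs ys.
Proof.
move=> i_add iZ i_inj xs ys Exy.
have /M_flat : teq ract (fun r (n : N) => r *: n)
    [seq (p.1, i p.2) | p <- xs ++ formal_opp ys] [::].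
  move=> A f fb; rewrite big_nil map_cat big_cat /= -/(map_snd i xs) (Exy A f fb).
  rewrite /map_snd -map_comp !big_map -big_split big1 //= => p _.
  by rewrite (balanced_oppl fb) // subrr.
move=> /(_ i_add iZ i_inj) Exy0 A f fb; apply/eqP; rewrite -subr_eq0.
by rewrite -(sum_formal_opp fb) // -big_cat (Exy0 A f fb) big_nil.
Qed.

Variables (V : lmodType R) (T : zmodType) (tens : M -> V -> T).
Hypothesis tensT : is_tensor ract (fun r (v : V) => r *: v) tens.
Variables (S : V -> Prop) (S_sub : is_submodule S).

Lemma flat_submodule_teq xs ys :
  (forall p, p \in xs -> S p.2) -> (forall p, p \in ys -> S p.2) ->
  \sum_(p <- xs) tens p.1 p.2 = \sum_(p <- ys) tens p.1 p.2 ->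
  teq_on S ract (fun r (v : V) => r *: v) xs ys.
Proof.
move=> Sxs Sys /(tensor_sum_teq tensT) Exy.
pose lift (zs : seq (M * V)) := map_snd (insubd (0 : submod_type S_sub)) zs.
have Elift : teq ract (fun r (u : submod_type S_sub) => r *: u) (lift xs) (lift ys).
  by apply: (flat_teq_inj (i := val)); rewrite ?map_snd_insubdK //; apply: val_inj.
move=> A f fb.
have sum_lift zs : (forall p, p \in zs -> S p.2) ->
    \sum_(p <- zs) f p.1 p.2 = \sum_(p <- lift zs) f p.1 (val p.2).
  by move=> Szs; rewrite -{1}(map_snd_insubdK S_sub Szs) big_map.
by rewrite (sum_lift _ Sxs) (sum_lift _ Sys); apply: Elift A _ (balanced_val S_sub fb).
Qed.

End Flatness.

Section FlatTensorMap.
Variables (R : nzRingType) (M : lmodType R) (ract : M -> R -> M).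
Hypotheses (M_flat : right_flat ract) (scale_ract : ract_scale_comm ract).
Variables (N N' : lmodType R) (i : N' -> N).
Hypotheses (i_add : additive_fun i) (iZ : forall r x, i (r *: x) = r *: i x).
Hypothesis i_inj : injective i.

Lemma tensor_map_inj :
  injective (tensor_map (fun r (n : N) => r *: n) (fun r (n : N') => r *: n) scale_ract i).
Proof.
move=> v w; rewrite -[v]tensor_of_repr -[w]tensor_of_repr !tensor_mapE //.
by move/tensor_ofP/(flat_teq_inj M_flat i_add iZ i_inj)/tensor_ofP.
Qed.

End FlatTensorMap.

(** * Left bialgebroids *)

(* The left R-module ▷G of the paper: r ▷ g = s(r) g. *)
Definition lmod_via (R G : nzRingType) (s : {rmorphism R -> G}) : Type := G.
HB.instance Definition _ (R G : nzRingType) (s : {rmorphism R -> G}) :=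
  GRing.Zmodule.on (lmod_via s).

Section LmodVia.
Variables (R G : nzRingType) (s : {rmorphism R -> G}).
Definition scale_via (r : R) (g : lmod_via s) : lmod_via s := (s r * g : G).

Lemma scale_viaA a b g : scale_via a (scale_via b g) = scale_via (a * b) g.
Proof. by rewrite /scale_via rmorphM mulrA. Qed.
Lemma scale_via1 : left_id 1 scale_via.
Proof. by move=> g; rewrite /scale_via rmorph1 mul1r. Qed.
Lemma scale_viaDr : right_distributive scale_via +%R.
Proof. by move=> r g g'; rewrite /scale_via mulrDr. Qed.
Lemma scale_viaDl g : {morph scale_via^~ g : a b / a + b}.
Proof. by move=> a b; rewrite /scale_via rmorphD mulrDl. Qed.
End LmodVia.

HB.instance Definition _ (R G : nzRingType) (s : {rmorphism R -> G}) :=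
  GRing.Zmodule_isLmodule.Build R (lmod_via s)
    (@scale_viaA R G s) (@scale_via1 R G s) (@scale_viaDr R G s) (@scale_viaDl R G s).

Lemma balanced3_slice (R G : nzRingType) (N A : zmodType) (P : N -> Prop) (s t : R -> G)
    (lactN : R -> N -> N) (f : G -> G -> N -> A) a :
  balanced3_on P s t lactN f -> balanced_on P (ractG t) lactN (f a).
Proof. by case=> _ fDm fDr _ fAr; split=> *; [apply: fDr | apply: fDm | apply: fAr]. Qed.

Section Bialgebroid.
Variables (R G : nzRingType) (s : {rmorphism R -> G}) (t : R -> G) (T : zmodType).
Variables (tens : G -> G -> T) (Delta : G -> T) (eps : G -> R).
Hypothesis HG : is_lbialgebroid s t tens Delta eps.
Local Notation balG := (balanced_on (fun _ => True) (ractG t) (lactG s)).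

Lemma tens_balanced : balG tens.
Proof. exact: tensor_balanced (lb_tensor HG). Qed.

Lemma tsum_cat xs ys : tsum tens (xs ++ ys) = tsum tens xs + tsum tens ys.
Proof. by rewrite /tsum big_cat. Qed.

Lemma tsum1 a b : tsum tens [:: (a, b)] = tens a b.
Proof. by rewrite /tsum big_seq1. Qed.

Lemma tsum_teq xs ys : tsum tens xs = tsum tens ys -> teq (ractG t) (lactG s) xs ys.
Proof. exact: (tensor_sum_teq (lb_tensor HG)). Qed.

Definition sweedler (g : G) : seq (G * G) :=
  projT1 (cid (tensor_sum_surj (lb_tensor HG) (Delta g))).

Lemma sweedlerE g : Delta g = tsum tens (sweedler g).
Proof. by rewrite /sweedler; case: cid. Qed.

Lemma Delta_add x y xs ys : Delta x = tsum tens xs -> Delta y = tsum tens ys ->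
  Delta (x + y) = tsum tens (xs ++ ys).
Proof. by move=> Ex Ey; rewrite (lb_DeltaD HG) tsum_cat Ex Ey. Qed.

Lemma Delta_sub x y xs ys : Delta x = tsum tens xs -> Delta y = tsum tens ys ->
  Delta (x - y) = tsum tens (xs ++ formal_opp ys).
Proof.
move=> Ex Ey; rewrite (additive_funB (lb_DeltaD HG)) tsum_cat Ex Ey.
by rewrite /tsum (sum_formal_opp tens_balanced).
Qed.

Lemma Delta_counit_split g xs : Delta g = tsum tens xs ->
  Delta g = tsum tens ([seq (p.1, p.2 - s (eps p.2)) | p <- xs] ++ [:: (g, 1)]).
Proof.
move=> Eg; rewrite tsum_cat tsum1 /tsum big_map.
under eq_bigr do rewrite (balanced_subr tens_balanced) -[s _]mulr1 -[_ * 1]/(lactG s _ 1)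
  -(balanced_act tens_balanced) //.
rewrite sumrB -(balanced_suml tens_balanced) // (lb_counitr HG Eg) -/(tsum tens xs) -Eg.
by rewrite subrK.
Qed.

Lemma Delta_sl r g xs : Delta g = tsum tens xs ->
  Delta (s r * g) = tsum tens [seq (s r * p.1, p.2) | p <- xs].
Proof.
move=> Eg; have := lb_Delta_bimod HG r 1 Eg; rewrite (lb_t1 HG) mulr1 => ->.
by congr tsum; apply: eq_map => p; rewrite mul1r.
Qed.

Lemma Delta_tl r g xs : Delta g = tsum tens xs ->
  Delta (t r * g) = tsum tens [seq (p.1, t r * p.2) | p <- xs].
Proof.
move=> Eg; have := lb_Delta_bimod HG 1 r Eg; rewrite rmorph1 mul1r => ->.
by congr tsum; apply: eq_map => p; rewrite mul1r.
Qed.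

Lemma Delta1 : Delta 1 = tsum tens [:: (1, 1)].
Proof. by rewrite tsum1 (lb_Delta1 HG). Qed.

Lemma Delta_s r : Delta (s r) = tsum tens [:: (s r, 1)].
Proof. by rewrite -[s r]mulr1 (Delta_sl r Delta1) /= mulr1. Qed.

Lemma Delta_t r : Delta (t r) = tsum tens [:: (1, t r)].
Proof. by rewrite -[t r]mulr1 (Delta_tl r Delta1) /= mulr1. Qed.

Lemma eps_sl r g : eps (s r * g) = r * eps g.
Proof. by have := lb_eps_bimod HG r 1 g; rewrite (lb_t1 HG) !mulr1. Qed.

Lemma eps_tl r g : eps (t r * g) = eps g * r.
Proof. by have := lb_eps_bimod HG 1 r g; rewrite rmorph1 !mul1r. Qed.

Lemma eps_s r : eps (s r) = r.
Proof. by rewrite -[s r]mulr1 eps_sl (lb_eps1 HG) mulr1. Qed.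

Lemma st_comm : ract_scale_comm (M := lmod_via s) (ractG t).
Proof.
move=> r r' g; change (s r * (t r' * g) = t r' * (s r * g)).
by rewrite !mulrA (lb_st HG).
Qed.

Local Notation tensorG lact := (tensor (M := lmod_via s) lact st_comm).
Local Notation balL N := (balanced_on (fun _ => True) (ractG t) (fun r (w : N) => r *: w)).

Lemma balanced3_tmul (N A : zmodType) (lact : R -> N -> N) (F : G -> tensorG lact -> A) :
  balL (tensorG lact) F ->
  balanced3_on (fun _ => True) s t lact (fun a x n => F a (tmul lact st_comm x n)).
Proof.
have tb := tmul_balanced lact st_comm.
move=> Fb; split=> [a a' x n _|a x x' n _|a x n n' _ _|r a x n _|r a x n _].
- exact: balanced_addl Fb _ _ _ _.
- by rewrite (balanced_addl tb) // (balanced_addr Fb).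
- by rewrite (balanced_addr tb) // (balanced_addr Fb).
- by rewrite -[t r * a]/(ractG t a r) (balanced_act Fb) // tmulZ.
- by rewrite -[t r * x]/(ractG t x r) (balanced_act tb).
Qed.

Lemma coassoc_teq g xs (dl dr : G * G -> seq (G * G)) :
  Delta g = tsum tens xs ->
  (forall p, p \in xs -> Delta p.1 = tsum tens (dl p) /\ Delta p.2 = tsum tens (dr p)) ->
  teq (ractG t) (fun r (w : tensorG (lactG s)) => r *: w)
    [seq (q.1, tmul (lactG s) st_comm q.2 p.2) | p <- xs, q <- dl p]
    [seq (p.1, tensor_of (lactG s) st_comm (dr p)) | p <- xs].
Proof.
move=> Eg Exs A F Fb; rewrite big_allpairs_dep big_map /=.
transitivity (\sum_(p <- xs) \sum_(q <- dr p) F p.1 (tmul (lactG s) st_comm q.1 q.2)).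
  by have := lb_coassoc HG Eg Exs (balanced3_tmul Fb).
by apply: eq_bigr => p _; rewrite tensor_ofE (balanced_sumr Fb).
Qed.

End Bialgebroid.

(** * The left Hopf kernel *)

Section HopfKernel.
Variables (R G H : nzRingType) (s : {rmorphism R -> G}) (t : R -> G) (T : zmodType).
Variables (tens : G -> G -> T) (Delta : G -> T) (eps : G -> R).
Variables (sH : {rmorphism R -> H}) (tH : R -> H) (TH : zmodType) (tensH : H -> H -> TH).
Variables (DeltaH : H -> TH) (epsH : H -> R) (pi : {rmorphism G -> H}).
Hypothesis HG : is_lbialgebroid s t tens Delta eps.
Hypothesis HH : is_lbialgebroid sH tH tensH DeltaH epsH.
Hypothesis Hpi : is_bialgebroid_surj s t tens Delta eps sH tH tensH DeltaH epsH pi.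

Local Notation B := (hopf_kernel t sH pi tens Delta).
Local Notation lactH := (fun r (h : H) => sH r * h).
Local Notation balG := (balanced_on (fun _ => True) (ractG t) (lactG s)).
Local Notation balGH := (balanced_on (fun _ => True) (ractG t) lactH).
Local Notation balL N := (balanced_on (fun _ => True) (ractG t) (fun r (w : N) => r *: w)).
Local Notation teqGH := (teq (ractG t) lactH).
Local Notation sweedlerE := (sweedlerE HG).
Local Notation st := (st_comm HG).
Local Notation GG := (tensor (M := lmod_via s) (lactG s) st).
Local Notation GH := (tensor (M := lmod_via s) lactH st).

Lemma pi_lact r g : pi (lactG s r g) = lactH r (pi g).
Proof. by rewrite /lactG rmorphM (bs_s Hpi). Qed.

Lemma tsum_teq_pi xs ys :
  tsum tens xs = tsum tens ys -> teqGH (map_snd pi xs) (map_snd pi ys).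
Proof.
move/(tsum_teq HG); apply: teq_map_snd => [x y|r g]; first exact: rmorphD.
exact: pi_lact.
Qed.

Lemma hopf_kernelP g xs :
  Delta g = tsum tens xs -> B g <-> teqGH (map_snd pi xs) [:: (g, 1)].
Proof.
move=> Eg; split=> [|Exs ys Eys]; first by apply.
by apply: teq_trans Exs; apply: tsum_teq_pi; rewrite -Eys -Eg.
Qed.

Lemma hopf_kernel_sum g xs (A : zmodType) (f : G -> H -> A) :
  B g -> Delta g = tsum tens xs -> balGH f -> \sum_(p <- xs) f p.1 (pi p.2) = f g 1.
Proof. by move=> Bg Eg fb; have := Bg xs Eg A f fb; rewrite big_map big_seq1. Qed.

Lemma hopf_kernel0 : B 0.
Proof.
apply/(hopf_kernelP (xs := [::])).
  by rewrite (additive_fun0 (lb_DeltaD HG)) /tsum big_nil.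
by move=> A f fb; rewrite big_nil big_seq1 (balanced_0l fb).
Qed.

Lemma hopf_kernelB x y : B x -> B y -> B (x - y).
Proof.
move=> Bx By; apply/(hopf_kernelP (Delta_sub HG (sweedlerE x) (sweedlerE y))) => A f fb.
rewrite big_seq1 /map_snd map_cat big_cat /= -map_comp !big_map /=.
have -> : \sum_(p <- sweedler HG y) f (- p.1) (pi p.2) = - f y 1.
  rewrite -(hopf_kernel_sum By (sweedlerE y) fb) -sumrN; apply: eq_bigr => p _.
  exact: balanced_oppl fb _ _ _.
by rewrite (hopf_kernel_sum Bx (sweedlerE x) fb) -(balanced_oppl fb) // -(balanced_addl fb).
Qed.

Lemma hopf_kernel_s r : B (s r).
Proof. by apply/(hopf_kernelP (Delta_s HG r)); rewrite /map_snd /= rmorph1. Qed.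

Lemma hopf_kernel1 : B 1.
Proof. by rewrite -(rmorph1 s); apply: hopf_kernel_s. Qed.

Lemma takeuchi_sum g xs r (A : zmodType) (F : G -> G -> A) :
  Delta g = tsum tens xs -> balG F ->
  \sum_(p <- xs) F (p.1 * t r) p.2 = \sum_(p <- xs) F p.1 (p.2 * s r).
Proof.
move=> Eg Fb; have := tsum_teq HG (lb_Delta_takeuchi HG r Eg) Fb.
by rewrite !big_map.
Qed.

Lemma hopf_kernelM b b' : B b -> B b' -> B (b * b').
Proof.
move=> Bb Bb'; set xs := sweedler HG b.
apply/(hopf_kernelP (lb_DeltaM HG (sweedlerE b) (sweedlerE b'))) => A f fb.
rewrite big_seq1 big_map big_allpairs_dep /= exchange_big /=.
pose g u h := \sum_(x <- xs) f (x.1 * u) (pi x.2 * h).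
have fRb u h : balG (fun v w => f (v * u) (pi w * h)).
  split=> [v w w' _ _|v v' w _|v r w _].
  - by rewrite rmorphD mulrDl (balanced_addr fb).
  - by rewrite mulrDl (balanced_addl fb).
  - by rewrite /ractG -mulrA [LHS](balanced_act fb) // pi_lact mulrA.
have gb : balGH g.
  split=> [u h h' _ _|u u' h _|u r h _]; rewrite /g.
  - by rewrite -big_split; apply: eq_bigr => x _; rewrite mulrDr (balanced_addr fb).
  - by rewrite -big_split; apply: eq_bigr => x _; rewrite mulrDr (balanced_addl fb).
  - under eq_bigr do rewrite /ractG mulrA.
    rewrite (takeuchi_sum r (sweedlerE b) (fRb u h)).
    by apply: eq_bigr => x _; rewrite rmorphM (bs_s Hpi) mulrA.
transitivity (\sum_(y <- sweedler HG b') g y.1 (pi y.2)).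
  by apply: eq_bigr => y _; apply: eq_bigr => x _; rewrite rmorphM.
rewrite (hopf_kernel_sum Bb' (sweedlerE b') gb) /g.
have kb : balGH (fun u h => f (u * b') h).
  split=> [u h h' _ _|u u' h _|u r h _].
  - exact: balanced_addr fb _ _ _ _ _.
  - by rewrite mulrDl (balanced_addl fb).
  - by rewrite /ractG -mulrA [LHS](balanced_act fb).
under eq_bigr do rewrite mulr1.
exact: hopf_kernel_sum Bb (sweedlerE b) kb.
Qed.

Lemma hopf_kernel_submodule : is_submodule (B : lmod_via s -> Prop).
Proof.
split; first by split; [apply: hopf_kernel0 | apply: hopf_kernelB].
by move=> r x Bx; apply: hopf_kernelM Bx; apply: hopf_kernel_s.
Qed.

Lemma eps_hopf_kernel_t b r : B b -> eps (b * t r) = eps b * r.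
Proof.
move=> Bb; have Ebt := lb_DeltaM HG (sweedlerE b) (Delta_t HG r).
have fb : balGH (fun u h => eps u * epsH (h * tH r)).
  split=> [u h h' _ _|u u' h _|u r' h _].
  - by rewrite mulrDl (lb_epsD HH) mulrDr.
  - by rewrite (lb_epsD HG) mulrDl.
  - by rewrite /ractG (eps_tl HG) -mulrA -mulrA (eps_sl HH).
rewrite -{1}(lb_counitr HG Ebt) (additive_fun_sum (lb_epsD HG)).
have epsHt : epsH (1 * tH r) = r.
  by rewrite mul1r -[tH r]mulr1 (eps_tl HH) (lb_eps1 HH) mul1r.
rewrite -[in RHS]epsHt -(hopf_kernel_sum Bb (sweedlerE b) fb) big_allpairs_dep.
apply: eq_bigr => x _; rewrite big_seq1 /= (eps_tl HG) mulr1.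
by rewrite -(bs_t Hpi) -rmorphM (bs_eps Hpi).
Qed.

Lemma eps_hopf_kernelM b g : B b -> eps (b * g) = eps b * eps g.
Proof.
by move=> Bb; rewrite (lb_epsM1 HG) (lb_epsM2 HG) (eps_s HG) eps_hopf_kernel_t.
Qed.

Lemma pi_hopf_kernel b : B b -> pi b = sH (eps b).
Proof.
move=> Bb; have fb : balGH (fun u h => sH (eps u) * h).
  split=> [u h h' _ _|u u' h _|u r h _].
  - by rewrite mulrDr.
  - by rewrite (lb_epsD HG) rmorphD mulrDl.
  - by rewrite /ractG (eps_tl HG) rmorphM mulrA.
rewrite -[RHS]mulr1 -(hopf_kernel_sum Bb (sweedlerE b) fb).
rewrite -{1}(lb_counitl HG (sweedlerE b)) rmorph_sum.
by apply: eq_bigr => p _; rewrite rmorphM (bs_s Hpi).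
Qed.

Definition hopf_kernel_plus (g : G) := B g /\ eps g = 0.
Local Notation Bplus := hopf_kernel_plus.

Lemma hopf_kernel_plus0 : Bplus 0.
Proof. by split; [apply: hopf_kernel0 | apply: additive_fun0 (lb_epsD HG)]. Qed.

Lemma hopf_kernel_plusB x y : Bplus x -> Bplus y -> Bplus (x - y).
Proof.
move=> [Bx ex] [By ey]; split; first exact: hopf_kernelB _ _ Bx By.
by rewrite (additive_funB (lb_epsD HG)) ex ey subrr.
Qed.

Lemma hopf_kernel_plusM b x : B b -> Bplus x -> Bplus (b * x) /\ Bplus (x * b).
Proof.
move=> Bb [Bx ex]; split; split.
- exact: hopf_kernelM _ _ Bb Bx.
- by rewrite eps_hopf_kernelM // ex mulr0.
- exact: hopf_kernelM _ _ Bx Bb.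
- by rewrite eps_hopf_kernelM // ex mul0r.
Qed.

Lemma pi_hopf_kernel_plus_span x : left_ideal_span Bplus x -> pi x = 0.
Proof.
apply: (left_ideal_span_ind (Q := fun x => pi x = 0)) => [|x' y|g y [By ey]].
- exact: rmorph0.
- by rewrite rmorphD => -> ->; rewrite addr0.
- by rewrite rmorphM (pi_hopf_kernel By) ey rmorph0 mulr0.
Qed.

Lemma eps_hopf_kernel_plus_span x : left_ideal_span Bplus x -> eps x = 0.
Proof.
apply: (left_ideal_span_ind (Q := fun x => eps x = 0)) => [|x' y ex ey|g y [_ ey]].
- exact: (additive_fun0 (lb_epsD HG)).
- by rewrite (lb_epsD HG) ex ey addr0.
- by rewrite (lb_epsM1 HG) ey rmorph0 mulr0 (additive_fun0 (lb_epsD HG)).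
Qed.

Section Flat.
Hypothesis G_flat : right_flat (ractG t).
Local Notation B_sub := hopf_kernel_submodule.

Lemma hopf_kernel_teq xs ys :
  (forall p, p \in xs -> B p.2) -> (forall p, p \in ys -> B p.2) ->
  tsum tens xs = tsum tens ys -> teq_on B (ractG t) (lactG s) xs ys.
Proof. exact: (flat_submodule_teq G_flat (V := lmod_via s) (lb_tensor HG) B_sub). Qed.

Definition hopf_defect (g : lmod_via s) : GH :=
  tensor_of lactH st (map_snd pi (sweedler HG g)) - tmul lactH st g 1.

Lemma hopf_defectE g xs : Delta g = tsum tens xs ->
  hopf_defect g = tensor_of lactH st (map_snd pi xs) - tmul lactH st g 1.
Proof.
move=> Eg; congr (_ - _); apply/tensor_ofP.
by apply: tsum_teq_pi; rewrite -sweedlerE.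
Qed.

Lemma hopf_defect_add : additive_fun hopf_defect.
Proof.
move=> x y; rewrite (hopf_defectE (Delta_add HG (sweedlerE x) (sweedlerE y))).
rewrite /map_snd map_cat tensor_of_cat (balanced_addl (tmul_balanced lactH st)) //.
by rewrite opprD addrACA.
Qed.

Lemma hopf_defectZ r g : hopf_defect (r *: g) = r *: hopf_defect g.
Proof.
rewrite (hopf_defectE (Delta_sl HG r (sweedlerE g))) scalerBr tensor_ofZ tmulZ.
by rewrite /map_snd /formal_scale -!map_comp.
Qed.

Lemma hopf_defect_eq0 g : hopf_defect g = 0 <-> B g.
Proof.
rewrite (hopf_kernelP (sweedlerE g)) -(tensor_ofP _ st); split.
  by move/eqP; rewrite subr_eq0 => /eqP.
by rewrite /hopf_defect => ->; rewrite subrr.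
Qed.

Lemma sweedler_tmul_balanced (A : zmodType) (F : G -> GH -> A) h :
  balL GH F -> balG (fun x y => F x (tmul lactH st y h)).
Proof.
have tb := tmul_balanced lactH st.
move=> Fb; split=> [x y y' _ _|x x' y _|x r y _].
- by rewrite (balanced_addl tb) // (balanced_addr Fb).
- exact: balanced_addl Fb _ _ _ _.
- by rewrite (balanced_act Fb) // tmulZ.
Qed.

Lemma sweedler_balanced (A : zmodType) (F : G -> GH -> A) :
  balL GH F ->
  balGH (fun u h => \sum_(q <- sweedler HG u) F q.1 (tmul lactH st q.2 h)).
Proof.
have tb := tmul_balanced lactH st.
move=> Fb; split=> [u h h' _ _|u u' h _|u r h _].
- rewrite -big_split; apply: eq_bigr => q _.
  by rewrite (balanced_addr tb) // (balanced_addr Fb).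
- rewrite -big_cat; apply: (tsum_teq HG) (sweedler_tmul_balanced h Fb).
  by rewrite -(Delta_add HG (sweedlerE u) (sweedlerE u')) -sweedlerE.
- have Eu : tsum tens (sweedler HG (t r * u)) =
      tsum tens [seq (p.1, t r * p.2) | p <- sweedler HG u].
    by rewrite -sweedlerE -(Delta_tl HG r (sweedlerE u)).
  rewrite /ractG (tsum_teq HG Eu (sweedler_tmul_balanced h Fb)).
  rewrite big_map; apply: eq_bigr => q _.
  by rewrite -[t r * _]/(ractG t _ r) (balanced_act tb).
Qed.

Lemma hopf_defect_coassoc b (A : zmodType) (F : G -> GH -> A) : B b -> balL GH F ->
  \sum_(p <- sweedler HG b) F p.1 (hopf_defect p.2) = 0.
Proof.
move=> Bb Fb; rewrite (eq_bigr (fun p =>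
    F p.1 (tensor_of lactH st (map_snd pi (sweedler HG p.2))) -
    F p.1 (tmul lactH st p.2 1))) => [|p _]; last exact: balanced_subr Fb _ _ _.
rewrite sumrB; apply/eqP; rewrite subr_eq0; apply/eqP.
pose piGG := tensor_map lactH (lactG s) st pi.
have pi_add : additive_fun pi by move=> x y; rewrite rmorphD.
have piGG_tmul x y : piGG (tmul (lactG s) st x y) = tmul lactH st x (pi y).
  by rewrite /piGG /tmul (tensor_mapE st pi_add pi_lact).
have F'b : balL GG (fun a w => F a (piGG w)).
  split=> [a w w' _ _|a a' w _|a r w _].
  - by rewrite /piGG (tensor_map_add pi_add pi_lact) (balanced_addr Fb).
  - exact: balanced_addl Fb _ _ _ _.
  - by rewrite (balanced_act Fb) // /piGG (tensor_mapZ pi_add pi_lact).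
have Ecoassoc := coassoc_teq (sweedlerE b)
  (fun p _ => conj (sweedlerE p.1) (sweedlerE p.2)) F'b.
rewrite big_allpairs_dep big_map /= in Ecoassoc.
transitivity
  (\sum_(p <- sweedler HG b) F p.1 (piGG (tensor_of (lactG s) st (sweedler HG p.2)))).
  by apply: eq_bigr => p _; rewrite /piGG (tensor_mapE st pi_add pi_lact).
rewrite -Ecoassoc.
under eq_bigr do under eq_bigr do rewrite piGG_tmul.
exact: hopf_kernel_sum Bb (sweedlerE b) (sweedler_balanced Fb).
Qed.

Lemma hopf_kernel_coact_rep b : B b -> exists xs, coact_rep tens Delta B b xs.
Proof.
move=> Bb; pose D := quot_induced (S_sub := B_sub) hopf_defect.
have D_add : additive_fun D := quot_induced_add hopf_defect_add hopf_defect_eq0.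
have DZ r q : D (r *: q) = r *: D q.
  exact: quot_inducedZ hopf_defect_add hopf_defectZ hopf_defect_eq0 r q.
have D_inj : injective D := quot_induced_inj hopf_defect_add hopf_defect_eq0.
have Enil : teq (ractG t) (fun r (q : quot_mod B_sub) => r *: q)
    (map_snd (quot_mod_pi B_sub) (sweedler HG b)) [::].
  apply: (flat_teq_inj G_flat D_add DZ D_inj (ys := [::])) => A F Fb.
  rewrite big_nil /map_snd -map_comp big_map /= /D.
  under eq_bigr do rewrite (quot_inducedE B_sub hopf_defect_add hopf_defect_eq0).
  exact: hopf_defect_coassoc Bb Fb.
have [ys [Bys Eys]] := tensor_quot_nil (V := lmod_via s) (lb_tensor HG) Enil.
by exists ys; split=> //; rewrite sweedlerE.
Qed.

Local Notation Bt := (submod_type B_sub).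
Local Notation scaleB := (fun r (u : Bt) => r *: u).
Local Notation GB := (tensor (M := lmod_via s) scaleB st).

Lemma kernel_lift_balanced (A : zmodType) (f : G -> G -> G -> A) :
  balanced3_on B s t (lactG s) f ->
  balL GB (fun a w => tensor_lift (fun (x : lmod_via s) (u : Bt) => f a x (val u)) w).
Proof.
move=> fb; have fab a := balanced_val B_sub (balanced3_slice a fb).
case: fb => fDl _ _ fAl _.
split=> [a w w' _ _|a a' w _|a r w _].
- rewrite -[w]tensor_of_repr -[w']tensor_of_repr -tensor_of_cat !tensor_liftE //.
  by rewrite big_cat.
- rewrite -[w]tensor_of_repr !tensor_liftE // -big_split.
  by apply: eq_bigr => p _; rewrite fDl //; apply: submod_valP.
- rewrite -[w]tensor_of_repr tensor_ofZ !tensor_liftE // big_map.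
  by apply: eq_bigr => p _; rewrite fAl //; apply: submod_valP.
Qed.

Lemma hopf_kernel_coassoc b xs (dl dr : G * G -> seq (G * G)) :
  B b -> coact_rep tens Delta B b xs ->
  (forall p, p \in xs ->
    Delta p.1 = tsum tens (dl p) /\ coact_rep tens Delta B p.2 (dr p)) ->
  forall (A : zmodType) (f : G -> G -> G -> A), balanced3_on B s t (lactG s) f ->
  \sum_(p <- xs) \sum_(q <- dl p) f q.1 q.2 p.2 =
  \sum_(p <- xs) \sum_(q <- dr p) f p.1 q.1 q.2.
Proof.
move=> _ [Bxs Eb] Exs A f fb; pose toB x : Bt := insubd 0 x.
have toBK x : B x -> val (toB x) = x := @submod_insubdK _ _ _ B_sub x.
have val_add : additive_fun (val : Bt -> G) by move=> u v; rewrite GRing.valD.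
have val_act r (u : Bt) : val (r *: u) = lactG s r (val u) by rewrite GRing.valZ.
pose iota := tensor_map (lactG s) scaleB st val.
have iota_inj : injective iota.
  exact: (tensor_map_inj (M := lmod_via s) G_flat (scale_ract := st) (N := lmod_via s)
    val_add val_act val_inj).
pose zs1 := [seq (q.1, tmul scaleB st q.2 (toB p.2)) | p <- xs, q <- dl p].
pose zs2 := [seq (p.1, tensor_of scaleB st (map_snd toB (dr p))) | p <- xs].
have Ezs : teq (ractG t) (fun r (w : GB) => r *: w) zs1 zs2.
  apply: (flat_teq_inj G_flat (i := iota) _ _ iota_inj);
    [exact: tensor_map_add | exact: tensor_mapZ | move=> A' F Fb].
  have Exs' p : p \in xs -> Delta p.1 = tsum tens (dl p) /\ Delta p.2 = tsum tens (dr p).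
    by case/Exs => -> [].
  have := coassoc_teq Eb Exs' Fb; rewrite /zs1 /zs2 /map_snd !big_map !big_allpairs_dep /=.
  move=> Ecoassoc; rewrite /iota; apply: etrans (etrans _ Ecoassoc) _.
  + apply: eq_big_seq => p /Bxs Bp; apply: eq_bigr => q _.
    by rewrite /tmul (tensor_mapE st val_add val_act) /map_snd /= toBK.
  + apply: eq_big_seq => p /Exs [_ [Bdr _]].
    by rewrite (tensor_mapE st val_add val_act) (map_snd_insubdK B_sub Bdr).
have fab a := balanced_val B_sub (balanced3_slice a fb).
have := Ezs A _ (kernel_lift_balanced fb).
rewrite /zs1 /zs2 !big_map big_allpairs_dep /=; move=> Ef; apply: etrans (etrans _ Ef) _.
- apply: eq_big_seq => p /Bxs Bp; apply: eq_bigr => q _.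
  by rewrite /tmul tensor_liftE // big_seq1 /= toBK.
- apply: eq_big_seq => p /Exs [_ [Bdr _]].
  by rewrite tensor_liftE // big_map; apply: eq_big_seq => q /Bdr /toBK ->.
Qed.

Lemma hopf_kernel_comodule_algebra : is_comodule_algebra_Delta s t tens Delta eps B.
Proof.
split.
- exact: hopf_kernel0.
- exact: hopf_kernelB.
- exact: hopf_kernel1.
- exact: hopf_kernelM.
- exact: hopf_kernel_s.
- exact: hopf_kernel_coact_rep.
- move=> b b' xs ys zs _ _ [Bxs Exs] [Bys Eys] [Bzs Ezs]; apply: hopf_kernel_teq => //.
    by move=> p; rewrite mem_cat => /orP [/Bxs | /Bys].
  by rewrite -Ezs (Delta_add HG Exs Eys).
- move=> r b xs ys _ [Bxs Exs] [Bys Eys]; apply: hopf_kernel_teq => //.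
    by move=> _ /mapP [p /Bxs Bp ->].
  by rewrite -Eys (Delta_sl HG r Exs).
- exact: hopf_kernel_coassoc.
- by move=> b xs _ [_ Eb]; have := lb_counitl HG Eb.
- move=> xs [Bxs Exs]; apply: hopf_kernel_teq => //.
    by move=> p /[!inE] /eqP ->; apply: hopf_kernel1.
  by rewrite -Exs (Delta1 HG).
- move=> b b' xs ys zs _ _ [Bxs Exs] [Bys Eys] [Bzs Ezs]; apply: hopf_kernel_teq => //.
    by move=> _ /allpairsP [[x y] [/Bxs Bx /Bys By ->]]; apply: hopf_kernelM _ _ Bx By.
  by rewrite -Ezs (lb_DeltaM HG Exs Eys).
Qed.

Definition coideal_split (x : G) := exists xs ys : seq (G * G),
  [/\ forall p, p \in xs -> left_ideal_span Bplus p.1,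
      forall p, p \in ys -> left_ideal_span Bplus p.2 &
      Delta x = tsum tens xs + tsum tens ys].

Lemma coideal_split_mul g y : Bplus y -> coideal_split (g * y).
Proof.
move=> [By ey]; have [ys [Bys Ey]] := hopf_kernel_coact_rep By.
set ys1 := [seq (c.1, c.2 - s (eps c.2)) | c <- ys].
have E := lb_DeltaM HG (sweedlerE g) (Delta_counit_split HG Ey).
exists [seq (a.1 * y, a.2 * 1) | a <- sweedler HG g],
       [seq (a.1 * c.1, a.2 * c.2) | a <- sweedler HG g, c <- ys1]; split.
- by move=> _ /mapP [a _ ->]; apply: left_ideal_span_gen.
- move=> _ /allpairsP [[a c] [/= _ /mapP [c' /Bys Bc' ->] ->]] /=.
  apply: left_ideal_span_gen; split.
    exact: (hopf_kernelB Bc' (hopf_kernel_s (r := eps c'.2))).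
  by rewrite (additive_funB (lb_epsD HG)) (eps_s HG) subrr.
rewrite E addrC /tsum !big_allpairs_dep big_map -big_split /=.
by apply: eq_bigr => a _; rewrite big_cat big_seq1.
Qed.

Lemma coideal_split_span x : left_ideal_span Bplus x -> coideal_split x.
Proof.
apply: (left_ideal_span_ind (Q := coideal_split))
  => [|x' y [xs1 [ys1 [H1 H2 E1]]] [xs2 [ys2 [H3 H4 E2]]]|].
- exists [::], [::]; split=> //.
  by rewrite (additive_fun0 (lb_DeltaD HG)) /tsum !big_nil addr0.
- exists (xs1 ++ xs2), (ys1 ++ ys2); split.
  + by move=> p; rewrite mem_cat => /orP [/H1 | /H3].
  + by move=> p; rewrite mem_cat => /orP [/H2 | /H4].
  + by rewrite (lb_DeltaD HG) E1 E2 !tsum_cat addrACA.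
- exact: coideal_split_mul.
Qed.

End Flat.

End HopfKernel.

Unset Implicit Arguments.

Theorem lemma4p10 (R G H : nzRingType)
    (s : {rmorphism R -> G}) (t : R -> G) (T : zmodType) (tens : G -> G -> T)
    (Delta : G -> T) (eps : G -> R)
    (sH : {rmorphism R -> H}) (tH : R -> H) (TH : zmodType) (tensH : H -> H -> TH)
    (DeltaH : H -> TH) (epsH : H -> R) (pi : {rmorphism G -> H}) :
  is_lbialgebroid s t tens Delta eps ->
  is_lbialgebroid sH tH tensH DeltaH epsH ->
  is_bialgebroid_surj s t tens Delta eps sH tH tensH DeltaH epsH pi ->
  right_flat (ractG t) ->
  let B := hopf_kernel t sH pi tens Delta in
  let Bplus := fun g => B g /\ eps g = 0 in
  let GBplus := fun x => exists xs : seq (G * G),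
        (forall p, p \in xs -> Bplus p.2) /\ x = \sum_(p <- xs) p.1 * p.2 in
  [/\
    (* (i) *)
    is_comodule_algebra_Delta s t tens Delta eps B,
    (* (ii) eps|_B is an algebra morphism; B^+ two-sided ideal; G B^+ ⊆ ker pi *)
    [/\ forall b b', B b -> B b' -> eps (b + b') = eps b + eps b',
        forall b b', B b -> B b' -> eps (b * b') = eps b * eps b' &
        eps 1 = 1],
    [/\ Bplus 0,
        forall x y, Bplus x -> Bplus y -> Bplus (x - y) &
        forall b x, B b -> Bplus x -> Bplus (b * x) /\ Bplus (x * b)],
    forall x, GBplus x -> pi x = 0 &
    (* (iii) G B^+ is a left G-submodule and a coring coideal *)
    [/\ GBplus 0,
        forall x y, GBplus x -> GBplus y -> GBplus (x + y),
        forall g x, GBplus x -> GBplus (g * x),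
        forall x, GBplus x -> eps x = 0 &
        forall x, GBplus x -> exists xs ys : seq (G * G),
          [/\ forall p, p \in xs -> GBplus p.1,
              forall p, p \in ys -> GBplus p.2 &
              Delta x = tsum tens xs + tsum tens ys]]].
Proof.
move=> HG HH Hpi G_flat B Bplus GBplus; split.
- exact: hopf_kernel_comodule_algebra HG Hpi G_flat.
- split=> [b b' _ _|b b' Bb _|]; first exact: (lb_epsD HG).
  + exact: (eps_hopf_kernelM HG HH Hpi _ Bb).
  + exact: (lb_eps1 HG).
- split; first exact: hopf_kernel_plus0 HG Hpi.
  + exact: hopf_kernel_plusB HG Hpi.
  + exact: hopf_kernel_plusM HG HH Hpi.
- exact: pi_hopf_kernel_plus_span HG Hpi.
- split; first exact: left_ideal_span0.
  + exact: left_ideal_spanD.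
  + exact: left_ideal_spanMl.
  + exact: eps_hopf_kernel_plus_span HG.
  + exact: (coideal_split_span HG Hpi G_flat).
Qed.
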